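(* For $n\in\mathbb{N}$, let $K_n^0$ be the complete graph on $\{0,1,\dots,n\}$ rooted at $0$. Then $\mathrm{PPF}_n=\mathrm{PPF}(K_n^0)$. Consequently $|\mathrm{PPF}(K_n^0)|=|\mathrm{SR}(K_n^0)|=(n-1)^{n-1}$.
   Context: $[n]=\{1,\dots,n\}$. A classical parking function of size $n$ is $p=(p_1,\dots,p_n)\in[n]^n$ with $|\{j: p_j\le i\}|\ge i$ for all $i\in[n]$; $\mathrm{PF}_n$ is their set. $p\in\mathrm{PF}_n$ has a breakpoint at $j\in[n]$ if $|\{i\in[n]:p_i\le j\}|=j$; $p$ is prime if its only breakpoint is $j=n$; $\mathrm{PPF}_n$ is the set of prime parking functions of size $n$. Functions on $[n]$ are identified with tuples. For a rooted graph $G=(\Gamma,s)$ (finite, undirected, loopless multigraph with sink $s$), $V$ is the vertex set, $\tilde V=V\setminus\{s\}$, $\mathrm{mult}(vw)$ the number of edges between $v,w$, $\deg^A(v)=\sum_{w\in A}\mathrm{mult}(vw)$, $\deg(v)=\deg^V(v)$. A $G$-parking function is $p:\tilde V\to\{1,2,\dots\}$ such that every nonempty $S\subseteq\tilde V$ contains $v$ with $p(v)\le\deg^{V\setminus S}(v)$. With $G^A$ the induced subgraph on $A\cup\{s\}$ rooted at $s$, $p$ is decomposable w.r.t. an ordered partition $(A,B)$ of $\tilde V$ into nonempty blocks if $p|_A$ is a $G^A$-parking function and $v\mapsto p(v)-\deg^A(v)$ on $B$ is a $G^B$-parking function; $p$ is prime if decomposable w.r.t. no such partition; $\mathrm{PPF}(G)$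 is the set of prime $G$-parking functions. A configuration $c:\tilde V\to\mathbb{Z}$ is stable if $c(v)<\deg(v)$ for all $v$; a stable $c$ is recurrent if there is no nonempty $F\subseteq\tilde V$ with $c(v)<\deg^F(v)$ for all $v\in F$; with $V_M(c)=\{v: c(v)\ge\deg(v)-\mathrm{mult}(vs)\}$ and $c^{v-}=c-\sum_{w\ne v}\mathrm{mult}(ws)\mathbf 1_w$, a recurrent $c$ is strongly recurrent if $c^{v-}$ is recurrent for all $v\in V_M(c)$; $\mathrm{SR}(G)$ is their set. *)

From mathcomp Require Import all_boot all_order all_algebra.
Set Implicit Arguments. Unset Strict Implicit. Unset Printing Implicit Defensive.
Import Order.TTheory GRing.Theory Num.Theory.

(* p = (p_1,...,p_n) is an n.-tuple of naturals; p_{i+1} = tnth p i. *)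

Definition is_PF (n : nat) (p : n.-tuple nat) : Prop :=
  (forall j : 'I_n, 1 <= tnth p j <= n) /\
  (forall i : nat, 1 <= i <= n -> i <= #|[set j : 'I_n | tnth p j <= i]|).

Definition breakpoint (n : nat) (p : n.-tuple nat) (j : nat) : Prop :=
  1 <= j <= n /\ #|[set i : 'I_n | tnth p i <= j]| = j.

Definition is_PPF (n : nat) (p : n.-tuple nat) : Prop :=
  is_PF p /\ (forall j, breakpoint p j -> j = n).

(* A rooted graph is given by a finite vertex type V, a multiplicity
   function m : V -> V -> nat (m v w = number of edges between v and w)
   and a sink s.  Functions on V~ = V \ {s} are represented as functions
   V -> int whose value at s is ignored. *)

Section Graphs.
Variables (V : finType) (m : V -> V -> nat) (s : V).

Definition deg_in (A : {set V}) (v : V) : nat := \sum_(w in A) m v w.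
Definition deg (v : V) : nat := deg_in [set: V] v.
Definition Vt : {set V} := [set v | v != s].

(* p restricted to A (A a subset of V~) is a G^A-parking function,
   where G^A is the induced subgraph on A \cup {s} rooted at s. *)
Definition is_GPF_on (A : {set V}) (p : V -> int) : Prop :=
  (forall v, v \in A -> (1 <= p v)%R) /\
  (forall S : {set V}, S \subset A -> S != set0 ->
     exists2 v, v \in S & (p v <= (deg_in ((A :|: [set s]) :\: S) v)%:Z)%R).

Definition is_GPF (p : V -> int) : Prop := is_GPF_on Vt p.

Definition decomposable (p : V -> int) (A B : {set V}) : Prop :=
  is_GPF_on A p /\ is_GPF_on B (fun v => p v - (deg_in A v)%:Z)%R.

Definition ordered_partition (A B : {set V}) : Prop :=
  A :|: B = Vt /\ A :&: B = set0 /\ A != set0 /\ B != set0.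

Definition is_prime_GPF (p : V -> int) : Prop :=
  is_GPF p /\
  (forall A B : {set V}, ordered_partition A B -> ~ decomposable p A B).

Definition stable (c : V -> int) : Prop :=
  forall v, v \in Vt -> (c v < (deg v)%:Z)%R.

Definition recurrent (c : V -> int) : Prop :=
  stable c /\
  ~ (exists F : {set V}, [/\ F \subset Vt, F != set0 &
        forall v, v \in F -> (c v < (deg_in F v)%:Z)%R]).

Definition VM (c : V -> int) : {set V} :=
  [set v in Vt | ((deg v)%:Z - (m v s)%:Z <= c v)%R].

Definition cminus (c : V -> int) (v : V) : V -> int :=
  fun u => (c u - (if u != v then Posz (m u s) else 0))%R.

Definition strongly_recurrent (c : V -> int) : Prop :=
  recurrent c /\ (forall v, v \in VM c -> recurrent (cminus c v)).

End Graphs.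

Definition Kmult (n : nat) (v w : 'I_n.+1) : nat := (v != w).

(* Identification of an n-tuple with a function on V~ = {1,...,n}:
   vertex i+1 (i : 'I_n) gets the i-th coordinate. *)
Definition tup_fun (n : nat) (p : n.-tuple nat) : 'I_n.+1 -> int :=
  fun v => match unlift ord0 v with Some i => Posz (tnth p i) | None => 0%R end.

Definition tupZ_fun (n : nat) (c : n.-tuple int) : 'I_n.+1 -> int :=
  fun v => match unlift ord0 v with Some i => tnth c i | None => 0%R end.

Definition in_PPF_K (n : nat) (p : n.-tuple nat) : Prop :=
  is_prime_GPF (@Kmult n) ord0 (tup_fun p).

Definition in_SR_K (n : nat) (c : n.-tuple int) : Prop :=
  strongly_recurrent (@Kmult n) ord0 (tupZ_fun c).

From mathcomp Require Import all_boot all_order all_algebra.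
From mathcomp Require Import zify.
Set Implicit Arguments. Unset Strict Implicit. Unset Printing Implicit Defensive.
Import Order.TTheory GRing.Theory Num.Theory.

(* On K_n^0 a vertex v sees exactly |X \ v| vertices of a set X, so the
   G-parking condition "every nonempty S in A has a v with p v <= |A| + 1 - |S|"
   is the classical parking condition on A, and p is decomposable along (A, B)
   exactly when it has a breakpoint at |A|: prime G-parking functions are prime
   parking functions.  Dually, c is recurrent iff n - c is a parking function,
   and strong recurrence asks that n - c stays parking after adding 1 away from
   any vertex where it equals 1; this shifts the counts by one and is primality,
   so SR(K_n^0) = n - PPF_n.  For the count, among the cyclic rotations (mod
   n - 1) of any x : [n] -> Z/(n-1) exactly one, x', makes x' + 1 a prime
   parking function: the rotation by the last minimiser of
   j |-> #{i | x i < j} - j.  Hence |PPF_n| = (n-1)^n / (n-1). *)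

Lemma enum_preimage (T U : eqType) (P : U -> Prop) (e : T -> U) (d : U -> T) (l : seq U) :
  injective e -> (forall u, P u -> e (d u) = u) ->
  uniq l -> (forall u, u \in l <-> P u) ->
  exists l' : seq T, [/\ uniq l', forall t, t \in l' <-> P (e t) & size l' = size l].
Proof.
move=> e_inj edK l_uniq mem_l; exists (map d l); split.
- rewrite map_inj_in_uniq // => u v /mem_l/edK eu /mem_l/edK ev duv.
  by rewrite -eu -ev duv.
- move=> t; split=> [/mapP[u /mem_l Pu ->] | Pet]; first by rewrite edK.
  by apply/mapP; exists (e t); [apply/mem_l | apply: e_inj; rewrite edK].
- by rewrite size_map.
Qed.

Section Parking.
Variable T : finType.
Implicit Types (A B X S : {set T}) (f g : T -> int).

Definition sublevel A g (k : nat) : {set T} := [set v in A | (g v <= k%:Z)%R].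

Definition nb_le A g k : nat := #|sublevel A g k|.

Definition parking A g : Prop :=
  (forall v, v \in A -> (1 <= g v)%R) /\
  (forall k, 0 < k <= #|A| -> k <= nb_le A g k).

Definition prime_parking A g : Prop :=
  parking A g /\ (forall k, 0 < k < #|A| -> k < nb_le A g k).

Lemma sublevel_sub A g k : sublevel A g k \subset A.
Proof. by apply/subsetP => v; rewrite inE => /andP[]. Qed.

Lemma nb_le_leq_card A g k : nb_le A g k <= #|A|.
Proof. exact/subset_leq_card/sublevel_sub. Qed.

Lemma nb_le_eq_card A g k : nb_le A g k = #|A| -> {in A, forall v, (g v <= k%:Z)%R}.
Proof.
move=> /eqP; rewrite eqn_leq nb_le_leq_card /= => leA v vA.
have /eqP defA : sublevel A g k == A by rewrite eqEcard sublevel_sub.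
by move: vA; rewrite -{1}defA inE => /andP[].
Qed.

Lemma eq_in_nb_le A f g k : {in A, f =1 g} -> nb_le A f k = nb_le A g k.
Proof.
move=> fg; apply: eq_card => v; rewrite !inE.
by case: (boolP (v \in A)) => //= vA; rewrite fg.
Qed.

Lemma eq_in_parking A f g : {in A, f =1 g} -> parking A f <-> parking A g.
Proof.
move=> fg; rewrite /parking.
split=> -[pos cnt]; split=> [v vA|k /cnt]; rewrite ?(eq_in_nb_le _ fg) //.
- by rewrite -fg //; apply: pos.
- by rewrite fg //; apply: pos.
Qed.

Lemma eq_in_prime_parking A f g :
  {in A, f =1 g} -> prime_parking A f <-> prime_parking A g.
Proof.
move=> fg; rewrite /prime_parking (eq_in_parking fg).
by split=> -[pk lt]; split=> // k /lt; rewrite (eq_in_nb_le _ fg).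
Qed.

Lemma parking_le_card A g : parking A g -> {in A, forall v, (g v <= (#|A|)%:Z)%R}.
Proof.
move=> [_ cnt] v vA; apply: (nb_le_eq_card _ vA); apply/eqP.
rewrite eqn_leq nb_le_leq_card /=; apply: cnt.
by rewrite leqnn andbT card_gt0; apply/set0Pn; exists v.
Qed.

Lemma parkingP A g :
  parking A g <->
  (forall v, v \in A -> (1 <= g v)%R) /\
  (forall S, S \subset A -> S != set0 ->
     exists2 v, v \in S & (g v <= (#|A| + 1 - #|S|)%:Z)%R).
Proof.
split=> -[pos cnt]; split=> //.
- move=> S SA S0; set k := #|A| + 1 - #|S|.
  have S_gt0 : 0 < #|S| by rewrite card_gt0.
  have SA_le : #|S| <= #|A| by apply: subset_leq_card.
  have [v /andP[vS gv] | none] := pickP [pred v in S | (g v <= k%:Z)%R].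
    by exists v.
  have : sublevel A g k \subset A :\: S.
    apply/subsetP => v; rewrite !inE => /andP[vA gv]; rewrite vA andbT.
    by apply/negP => vS; move: (none v); rewrite /= vS gv.
  move/subset_leq_card; rewrite cardsD (setIidPr SA) => le_sub.
  have := cnt k; rewrite /nb_le; lia.
- move=> k /andP[k0 kA]; rewrite leqNgt; apply/negP => lt_k.
  have sub_k := sublevel_sub A g k.
  have cardD : #|A :\: sublevel A g k| = #|A| - nb_le A g k.
    by rewrite cardsD (setIidPr sub_k).
  have [|v] := cnt _ (subsetDl A (sublevel A g k)).
    by rewrite -card_gt0 cardD; lia.
  rewrite cardD !inE => /andP[/negP notin vA] gv; apply: notin; rewrite vA /=.
  by apply: le_trans gv _; rewrite lez_nat; lia.
Qed.

Lemma sublevel_sublevel A g j k : j <= k -> sublevel (sublevel A g k) g j = sublevel A g j.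
Proof.
move=> jk; apply/setP => v; rewrite !inE -andbA; congr (_ && _).
by apply/andP/idP => [[] //|gv]; split=> //; apply: le_trans gv _; rewrite lez_nat.
Qed.

Lemma parking_breakpoint X g k :
  parking X g -> nb_le X g k = k ->
  parking (sublevel X g k) g /\
  parking (X :\: sublevel X g k) (fun v => g v - k%:Z)%R.
Proof.
move=> [pos cnt] bk.
have sub_k := sublevel_sub X g k.
have k_le : k <= #|X| by rewrite -bk nb_le_leq_card.
split; split.
- by move=> v /(subsetP sub_k); apply: pos.
- move=> j /andP[j0]; rewrite -/(nb_le X g k) bk => jk.
  by rewrite /nb_le sublevel_sublevel // cnt // j0 (leq_trans jk).
- move=> v; rewrite !inE negb_and => /andP[/orP[/negP// | gv] _].
  by rewrite lerBrDr; move: gv; rewrite -ltNge; lia.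
- move=> j /andP[j0]; rewrite cardsD (setIidPr sub_k) -/(nb_le X g k) bk => jX.
  have sub_jk : sublevel X g k \subset sublevel X g (j + k).
    apply/subsetP => v; rewrite !inE => /andP[-> gv].
    by apply: le_trans gv _; rewrite lez_nat leq_addl.
  rewrite /nb_le; have -> : sublevel (X :\: sublevel X g k) (fun v => g v - k%:Z)%R j =
            sublevel X g (j + k) :\: sublevel X g k.
    by apply/setP => v; rewrite !inE lerBlDr PoszD -andbA.
  rewrite cardsD (setIidPr sub_jk) -/(nb_le X g (j + k)) -/(nb_le X g k) bk.
  by have := cnt (j + k); lia.
Qed.

Lemma nb_le_setU_parking A B g :
  parking A g -> parking B (fun v => g v - (#|A|)%:Z)%R ->
  nb_le (A :|: B) g #|A| = #|A|.
Proof.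
move=> pA [posB _]; apply: eq_card => v; rewrite !inE.
case: (boolP (v \in A)) => vA /=; first by rewrite parking_le_card.
case: (boolP (v \in B)) => //= vB; have := posB v vB.
by rewrite lerBrDr; lia.
Qed.

Lemma prime_parkingE X g :
  prime_parking X g <->
  parking X g /\
  (forall A B, A :|: B = X -> A :&: B = set0 -> A != set0 -> B != set0 ->
     ~ (parking A g /\ parking B (fun v => g v - (#|A|)%:Z)%R)).
Proof.
split=> -[pX prime]; split=> //.
  move=> A B defX AB0 A0 B0 [pA pB].
  have := prime #|A|; rewrite -defX (nb_le_setU_parking pA pB) ltnn.
  rewrite cardsU AB0 cards0 subn0 card_gt0 A0 -{1}[#|A|]addn0 ltn_add2l card_gt0 B0.
  by move=> /(_ isT).
move=> k /andP[k0 kX]; rewrite ltn_neqAle pX.2 ?k0 ?(ltnW kX) // andbT; apply/eqP => bk.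
have [pL pXL] := parking_breakpoint pX (esym bk).
have cardL : #|sublevel X g k| = k by rewrite -/(nb_le X g k) -bk.
move: (sublevel X g k) (sublevel_sub X g k) cardL pL pXL => L subL cardL pL pXL.
apply: (prime L (X :\: L)).
- by rewrite -{1}(setIidPr subL) setID.
- by apply/setP => v; rewrite !inE; case: (v \in L).
- by rewrite -card_gt0 cardL.
- by rewrite -card_gt0 cardsD (setIidPr subL) cardL subn_gt0.
- by rewrite cardL.
Qed.

Lemma nb_le_shift X g v k :
  (g v <= 1)%R -> 0 < k ->
  nb_le X (fun u => g u + (u != v)%:Z)%R k.+1 = nb_le X g k.
Proof.
move=> gv k0; apply: eq_card => u; rewrite !inE; congr (_ && _).
have [->|_] := eqVneq u v; rewrite ?addr0 /=.
  by apply/idP/idP => _; apply: le_trans gv _; rewrite lez_nat.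
by rewrite -[k.+1]addn1 PoszD lerD2r.
Qed.

Lemma prime_parking_shiftP X g :
  0 < #|X| ->
  prime_parking X g <->
  parking X g /\
  (forall v, v \in X -> (g v <= 1)%R -> parking X (fun u => g u + (u != v)%:Z)%R).
Proof.
move=> X_gt0; split=> -[pX shift]; split=> //.
  move=> v vX gv; split=> [u uX | [//|[|k]] /andP[_ kX]].
  - by apply: le_trans (pX.1 u uX) _; rewrite lerDl.
  - rewrite card_gt0; apply/set0Pn; exists v.
    by rewrite !inE vX eqxx addr0.
  - by rewrite nb_le_shift //; apply: shift.
move=> k /andP[k0 kX]; have [v] : exists v, v \in sublevel X g 1.
  by apply/set0Pn; rewrite -card_gt0 (leq_trans _ (pX.2 1 _)) ?X_gt0.
rewrite inE => /andP[vX gv].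
by rewrite -(nb_le_shift X gv k0); apply: (shift v vX gv).2; rewrite kX.
Qed.

Lemma prime_parking_lt_card A g :
  prime_parking A g -> 1 < #|A| -> {in A, forall v, (g v < (#|A|)%:Z)%R}.
Proof.
move=> [_ prime] A_gt1 v vA.
have lt_nb : #|A|.-1 < nb_le A g #|A|.-1 by apply: prime; lia.
have full : nb_le A g #|A|.-1 = #|A|.
  by apply/eqP; rewrite eqn_leq nb_le_leq_card /=; lia.
by have := nb_le_eq_card full vA; lia.
Qed.

End Parking.

Lemma nb_le_imset (T U : finType) (h : U -> T) (A : {set U}) (g : T -> int) k :
  injective h -> nb_le (h @: A) g k = nb_le A (g \o h) k.
Proof.
move=> h_inj; rewrite /nb_le -(card_imset _ h_inj); apply: eq_card => v.
rewrite inE; apply/andP/imsetP => [[/imsetP[u uA ->] le]|[u]].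
- by exists u; rewrite // inE uA.
- by rewrite inE => /andP[uA le] ->; rewrite imset_f.
Qed.

Lemma parking_imset (T U : finType) (h : U -> T) (A : {set U}) (g : T -> int) :
  injective h -> parking (h @: A) g <-> parking A (g \o h).
Proof.
move=> h_inj; rewrite /parking (card_imset _ h_inj).
split=> -[pos cnt].
  split=> [u uA|k]; first by apply: pos; rewrite imset_f.
  by rewrite -nb_le_imset //; apply: cnt.
split=> [v /imsetP[u uA ->]|k]; first exact: pos.
by rewrite nb_le_imset //; apply: cnt.
Qed.

Lemma prime_parking_imset (T U : finType) (h : U -> T) (A : {set U}) (g : T -> int) :
  injective h -> prime_parking (h @: A) g <-> prime_parking A (g \o h).
Proof.
move=> h_inj; rewrite /prime_parking (parking_imset _ _ h_inj) (card_imset _ h_inj).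
split=> -[pk lt]; split=> // k; first by rewrite -nb_le_imset //; apply: lt.
by rewrite nb_le_imset //; apply: lt.
Qed.

Section CompleteGraph.
Variable n : nat.
Local Notation K := (@Kmult n).
Local Notation s := (ord0 : 'I_n.+1).
Local Notation Vn := (Vt s).
Implicit Types (A B S X : {set 'I_n.+1}) (c g : 'I_n.+1 -> int).

Lemma deg_in_Kmult X v : deg_in K X v = #|X :\ v|.
Proof.
rewrite /deg_in -sum1_card [RHS]big_mkcond [LHS]big_mkcond /=.
by apply: eq_bigr => w _; rewrite !inE /Kmult eq_sym; case: (w \in X); case: (w != v).
Qed.

Lemma deg_Kmult v : deg K v = n.
Proof.
rewrite /deg deg_in_Kmult.
by move: (cardsD1 v setT); rewrite cardsT card_ord in_setT => -[].
Qed.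

Lemma Vt_ord0 : Vn = lift s @: [set: 'I_n].
Proof.
apply/setP => v; rewrite inE; apply/idP/imsetP => [|[i _ ->]].
  by rewrite eq_sym => /unlift_some[i -> _]; exists i.
by rewrite eq_sym neq_lift.
Qed.

Lemma card_Vt : #|Vn| = n.
Proof. by rewrite Vt_ord0 card_imset ?cardsT ?card_ord //; apply: lift_inj. Qed.

Lemma sink_notin A : A \subset Vn -> s \notin A.
Proof. by move=> /subsetP AV; apply/negP => /AV; rewrite inE eqxx. Qed.

Lemma deg_in_Kmult_outside A S v :
  A \subset Vn -> S \subset A -> v \in S ->
  deg_in K ((A :|: [set s]) :\: S) v = #|A| + 1 - #|S|.
Proof.
move=> AV SA vS; rewrite deg_in_Kmult.
have vD : v \notin (A :|: [set s]) :\: S by rewrite inE vS.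
move: (cardsD1 v ((A :|: [set s]) :\: S)); rewrite (negbTE vD) add0n => <-.
rewrite cardsD setUC cardsU1 (sink_notin AV) (setIidPr _) ?add1n ?addn1 //.
by apply: subset_trans SA _; apply: subsetUr.
Qed.

Lemma deg_in_Kmult_self S v : v \in S -> deg_in K S v = #|S|.-1.
Proof. by move=> vS; rewrite deg_in_Kmult (cardsD1 v S) vS. Qed.

Lemma is_GPF_on_Kmult A g : A \subset Vn -> is_GPF_on K s A g <-> parking A g.
Proof.
move=> AV; rewrite parkingP.
split=> -[pos outside]; split=> // S SA S0; have [v vS gv] := outside S SA S0;
  by exists v; rewrite ?deg_in_Kmult_outside // in gv *.
Qed.

Lemma decomposable_Kmult A B g :
  ordered_partition s A B ->
  decomposable K s g A B <-> parking A g /\ parking B (fun v => g v - (#|A|)%:Z)%R.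
Proof.
case=> defV [AB0 _].
have AV : A \subset Vn by rewrite -defV subsetUl.
have BV : B \subset Vn by rewrite -defV subsetUr.
have degA : {in B, (fun v => g v - (deg_in K A v)%:Z)%R =1 (fun v => g v - (#|A|)%:Z)%R}.
  move=> v vB /=; have vA : v \notin A.
    by apply/negP => vA; have := in_set0 v; rewrite -AB0 inE vA vB.
  by rewrite deg_in_Kmult; move: (cardsD1 v A); rewrite (negbTE vA) add0n => <-.
by rewrite /decomposable !is_GPF_on_Kmult // (eq_in_parking degA).
Qed.

Lemma is_prime_GPF_Kmult g : is_prime_GPF K s g <-> prime_parking Vn g.
Proof.
rewrite prime_parkingE /is_prime_GPF /is_GPF is_GPF_on_Kmult //.
split=> -[pV nodec]; split=> // A B.
  move=> defV AB0 A0 B0; rewrite -decomposable_Kmult; first exact: nodec.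
  by do !split.
by case=> defV [AB0 [A0 B0]]; rewrite decomposable_Kmult //; apply: nodec.
Qed.

Lemma le_deg_in_Kmult_dual S c v :
  S \subset Vn -> v \in S ->
  ((deg_in K S v)%:Z <= c v)%R =
  (n%:Z - c v <= (deg_in K ((Vn :|: [set s]) :\: S) v)%:Z)%R.
Proof.
move=> SV vS; rewrite deg_in_Kmult_self // deg_in_Kmult_outside // card_Vt.
have S_gt0 : 0 < #|S| by rewrite card_gt0; apply/set0Pn; exists v.
have := subset_leq_card SV; rewrite card_Vt.
by move: (c v) #|S| S_gt0 => z a a_gt0 a_le; apply/idP/idP; lia.
Qed.

Lemma recurrent_Kmult c : recurrent K s c <-> parking Vn (fun v => n%:Z - c v)%R.
Proof.
rewrite -is_GPF_on_Kmult // /recurrent /stable /is_GPF_on.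
split=> -[st nF]; split.
- by move=> v vV; move: (st v vV); rewrite deg_Kmult; lia.
- move=> S SV S0.
  have [v /andP[vS le] | none] := pickP [pred v in S | (deg_in K S v)%:Z <= c v]%R.
    by exists v; rewrite // -le_deg_in_Kmult_dual.
  case: nF; exists S; split=> // v vS.
  by move: (none v); rewrite /= vS /= ltNge => ->.
- by move=> v vV; move: (st v vV); rewrite deg_Kmult; lia.
- move=> [F [FV F0 low]]; have [v vF] := nF F FV F0.
  by rewrite -le_deg_in_Kmult_dual // leNgt low.
Qed.

Lemma VM_Kmult c v : (v \in VM K s c) = (v \in Vn) && (n%:Z - c v <= 1)%R.
Proof.
rewrite !inE deg_Kmult /Kmult; case: (v != s) => //=.
by move: (c v) => z; apply/idP/idP; lia.
Qed.

Lemma cminus_Kmult c v u :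
  u \in Vn -> (n%:Z - cminus K s c v u = n%:Z - c u + (u != v)%:Z)%R.
Proof.
by rewrite inE /cminus /Kmult => ->; case: (u != v) => /=; move: (c u) => z; lia.
Qed.

Lemma strongly_recurrent_Kmult c :
  0 < n -> strongly_recurrent K s c <-> prime_parking Vn (fun v => n%:Z - c v)%R.
Proof.
move=> n_gt0; rewrite prime_parking_shiftP ?card_Vt // /strongly_recurrent recurrent_Kmult.
have rec_minus v : recurrent K s (cminus K s c v) <->
                   parking Vn (fun u => n%:Z - c u + (u != v)%:Z)%R.
  by rewrite recurrent_Kmult; apply: eq_in_parking => u uV; rewrite cminus_Kmult.
split=> -[pV max]; split=> // v.
  by move=> vV le1; apply/rec_minus/max; rewrite VM_Kmult vV.
by rewrite VM_Kmult => /andP[vV le1]; apply/rec_minus/max.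
Qed.

End CompleteGraph.

Section CycleLemma.
Variables (I : finType) (m : nat).
Local Notation N := m.+1.
Hypothesis cardI : #|I| = N.+1.
Implicit Types (x : {ffun I -> 'I_N}) (r : 'I_N) (t : nat).

Definition nb_lt x (a : nat) : nat := \sum_i (x i < a : nat).

Definition rot r x : {ffun I -> 'I_N} := [ffun i => x i - r]%R.

Lemma rotK r : cancel (rot r) (rot (- r)%R).
Proof. by move=> x; apply/ffunP => i; rewrite !ffunE opprK subrK. Qed.

Lemma val_subZp (a r : 'I_N) : val (a - r)%R = if r <= a then a - r else a + N - r.
Proof.
rewrite /= /Zp_opp /Zp_add /=.
have ha := ltn_ord a; have hr := ltn_ord r.
case: (posnP r) => [-> | r_gt0]; first by rewrite !subn0 modnn addn0 modn_small.
rewrite (modn_small (_ : N - r < N)); last lia.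
case: leqP => ra; last by rewrite modn_small; lia.
rewrite (_ : a + (N - r) = a - r + N); last lia.
by rewrite modnDr modn_small //; lia.
Qed.

Lemma nb_lt_full x a : N <= a -> nb_lt x a = N.+1.
Proof.
move=> Na; rewrite /nb_lt (eq_bigr (fun _ => 1)) ?sum1_card ?cardI //.
by move=> i _; rewrite (leq_trans (ltn_ord (x i)) Na).
Qed.

Lemma nb_lt_rot x r t :
  r + t <= N -> nb_lt (rot r x) t + nb_lt x r = nb_lt x (r + t).
Proof.
move=> rt; rewrite /nb_lt -big_split /=; apply: eq_bigr => i _.
rewrite ffunE val_subZp; move: (x i) (ltn_ord (x i)) (ltn_ord r) => a a_lt r_lt.
case: (leqP r a) => ra.
  by case: (ltnP (a - r) t); case: (ltnP a (r + t)) => //=; lia.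
by case: (ltnP (a + N - r) t); case: (ltnP a (r + t)) => //=; lia.
Qed.

Lemma nb_lt_rot_wrap x r t :
  N <= r + t -> t <= N -> nb_lt (rot r x) t + nb_lt x r = N.+1 + nb_lt x (r + t - N).
Proof.
move=> rt tN; rewrite -cardI -sum1_card /nb_lt -!big_split /=; apply: eq_bigr => i _.
rewrite ffunE val_subZp; move: (x i) (ltn_ord (x i)) (ltn_ord r) => a a_lt r_lt.
case: (leqP r a) => ra.
  by case: (ltnP (a - r) t); case: (ltnP a (r + t - N)) => //=; lia.
by case: (ltnP (a + N - r) t); case: (ltnP a (r + t - N)) => //=; lia.
Qed.

Definition is_prime_pf x : bool := [forall t : 'I_N, (0 < t) ==> (t < nb_lt x t)].

(* [r] is the last minimiser of [j |-> nb_lt x j - j], stated without subtraction. *)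
Definition last_min x r : Prop :=
  forall j : 'I_N, (j < r -> nb_lt x r + j <= nb_lt x j + r) /\
                   (r < j -> nb_lt x r + j < nb_lt x j + r).

Lemma last_min_rot_prime x r : is_prime_pf (rot r x) -> last_min x r.
Proof.
move=> /forallP prime j.
have prime_at t : 0 < t < N -> t < nb_lt (rot r x) t.
  by case/andP=> t0 tN; apply: (implyP (prime (Ordinal tN))).
have := ltn_ord j; have := ltn_ord r => r_lt j_lt.
split=> [jr | rj].
- have := prime_at (j + N - r); have := @nb_lt_rot_wrap x r (j + N - r).
  by rewrite (_ : r + (j + N - r) - N = j); lia.
- have := prime_at (j - r); have := @nb_lt_rot x r (j - r).
  by rewrite (_ : r + (j - r) = j); lia.
Qed.

Lemma rot_prime_last_min x r : last_min x r -> is_prime_pf (rot r x).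
Proof.
move=> min; apply/forallP => t; apply/implyP => t_gt0.
have := ltn_ord t; have := ltn_ord r => r_lt t_lt.
rewrite -(ltn_add2r (nb_lt x r)).
case: (ltnP (r + t) N) => rt.
- by rewrite nb_lt_rot ?(ltnW rt) //; have := (min (Ordinal rt)).2 => /=; lia.
- have j_lt : r + t - N < N by lia.
  by rewrite nb_lt_rot_wrap ?(ltnW t_lt) //; have := (min (Ordinal j_lt)).1 => /=; lia.
Qed.

Lemma last_min_uniq x r r' : last_min x r -> last_min x r' -> r = r'.
Proof.
move=> min min'; apply/val_inj/eqP; case: (ltngtP r r') => // lt.
- by have := (min r').2 lt; have := (min' r).1 lt; lia.
- by have := (min r').1 lt; have := (min' r).2 lt; lia.
Qed.

(* Lexicographic key: smallest [nb_lt x j - j] first, then largest [j]. *)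
Definition min_point x : 'I_N :=
  [arg min_(j < ord0) ((nb_lt x j + N - j) * N + (N - 1 - j))].

Lemma last_min_point x : last_min x (min_point x).
Proof.
rewrite /min_point; case: arg_minnP => // r _ min j.
have := min j isT; have := ltn_ord j; have := ltn_ord r => r_lt j_lt.
by split=> ?; nia.
Qed.

Lemma card_prime_pf : #|[set x | is_prime_pf x]| = N ^ N.
Proof.
pose split_rot x := (min_point x, rot (min_point x) x).
have split_inj : injective split_rot.
  by move=> x y [eq_r]; rewrite eq_r; apply: (can_inj (rotK _)).
have split_onto :
    split_rot @: [set: {ffun I -> 'I_N}] = setX [set: 'I_N] [set x | is_prime_pf x].
  apply/setP => -[r y]; rewrite !inE /=; apply/imsetP/idP => [[x _ [_ ->]] | prime_y].
    exact/rot_prime_last_min/last_min_point.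
  set x := rot (- r)%R y.
  have eq_y : rot r x = y by rewrite /x -{2}(rotK (- r)%R y) opprK.
  have eq_r : min_point x = r.
    by apply: last_min_uniq (last_min_point x) _; apply: last_min_rot_prime; rewrite eq_y.
  by exists x; rewrite ?inE // /split_rot eq_r eq_y.
have := card_imset [set: {ffun I -> 'I_N}] split_inj.
rewrite split_onto cardsX !cardsT card_ffun !card_ord cardI expnS.
by move/eqP; rewrite eqn_mul2l /= => /eqP.
Qed.

Definition succ_pf x : {ffun I -> int} := [ffun i => Posz (x i).+1].

Lemma succ_pf_inj : injective succ_pf.
Proof.
move=> x y /ffunP eq_xy; apply/ffunP => i; apply/val_inj.
by have := eq_xy i; rewrite !ffunE => -[].
Qed.

Lemma nb_le_succ x k : nb_le [set: I] (succ_pf x) k = nb_lt x k.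
Proof.
rewrite /nb_le /nb_lt -sum1_card big_mkcond /=; apply: eq_bigr => i _.
by rewrite !inE ffunE lez_nat; case: (x i < k).
Qed.

Lemma prime_parking_succ x :
  prime_parking [set: I] (succ_pf x) <-> is_prime_pf x.
Proof.
rewrite /prime_parking /parking cardsT cardI.
split=> [[_ prime] | /forallP prime].
  apply/forallP => t; apply/implyP => t_gt0.
  by rewrite -nb_le_succ; apply: prime; rewrite t_gt0 ltnS ltnW ?ltn_ord.
have prime_at k : 0 < k <= N -> k < nb_le [set: I] (succ_pf x) k.
  case/andP=> k_gt0; rewrite leq_eqVlt nb_le_succ => /orP[/eqP -> | kN].
    by rewrite nb_lt_full.
  exact: (implyP (prime (Ordinal kN))).
split=> [|k /andP[k_gt0 kI]]; last by apply: prime_at; rewrite k_gt0.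
split=> [i _ | k /andP[k_gt0]]; first by rewrite ffunE lez_nat.
rewrite leq_eqVlt => /orP[/eqP -> | kN]; last by apply/ltnW/prime_at; rewrite k_gt0.
by rewrite nb_le_succ nb_lt_full.
Qed.

End CycleLemma.

Definition pf_of_tuple n (p : n.-tuple nat) : {ffun 'I_n -> int} :=
  [ffun i => Posz (tnth p i)].

Definition pf_of_config n (c : n.-tuple int) : {ffun 'I_n -> int} :=
  [ffun i => n%:Z - tnth c i]%R.

Definition tuple_of_pf n (g : {ffun 'I_n -> int}) : n.-tuple nat :=
  [tuple `|g i|%N | i < n].

Definition config_of_pf n (g : {ffun 'I_n -> int}) : n.-tuple int :=
  [tuple (n%:Z - g i)%R | i < n].

Lemma pf_of_tupleK n : cancel (@pf_of_tuple n) (@tuple_of_pf n).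
Proof. by move=> p; apply: eq_from_tnth => i; rewrite tnth_mktuple ffunE. Qed.

Lemma tuple_of_pfK n (g : {ffun 'I_n -> int}) :
  (forall i, 0 <= g i)%R -> pf_of_tuple (tuple_of_pf g) = g.
Proof. by move=> g_ge0; apply/ffunP => i; rewrite !ffunE tnth_mktuple gez0_abs. Qed.

Lemma pf_of_configK n : cancel (@pf_of_config n) (@config_of_pf n).
Proof. by move=> c; apply: eq_from_tnth => i; rewrite tnth_mktuple ffunE opprB subrKC. Qed.

Lemma config_of_pfK n : cancel (@config_of_pf n) (@pf_of_config n).
Proof. by move=> g; apply/ffunP => i; rewrite !ffunE tnth_mktuple opprB subrKC. Qed.

Lemma is_PPF_prime_parking n (p : n.-tuple nat) :
  is_PPF p <-> prime_parking [set: 'I_n] (pf_of_tuple p).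
Proof.
have nb_leE k : nb_le [set: 'I_n] (pf_of_tuple p) k = #|[set j | tnth p j <= k]|.
  by apply: eq_card => j; rewrite !inE ffunE lez_nat.
have card_n : #|[set: 'I_n]| = n by rewrite cardsT card_ord.
rewrite /is_PPF /is_PF /breakpoint.
split=> [[[range cnt] bk] | [pk prime]].
  split; first split.
  - by move=> j _; rewrite ffunE lez_nat; case/andP: (range j).
  - by move=> k; rewrite card_n nb_leE; apply: cnt.
  move=> k; rewrite card_n => /andP[k_gt0 k_lt].
  rewrite ltn_neqAle nb_leE cnt ?k_gt0 ?(ltnW k_lt) // andbT; apply/eqP => /esym eq_k.
  suff k_n : k = n by rewrite k_n ltnn in k_lt.
  by apply: bk; rewrite k_gt0 ltnW.
split; first split.
- move=> j; have := pk.1 j (in_setT j); rewrite ffunE lez_nat => -> /=.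
  by have := parking_le_card pk (in_setT j); rewrite ffunE card_n lez_nat.
- by move=> k k_bd; rewrite -nb_leE; apply: pk.2; rewrite card_n.
move=> j [/andP[j_gt0 jn] eq_j]; apply/eqP; rewrite eqn_leq jn leqNgt.
apply/negP => j_lt; have := prime j; rewrite card_n j_gt0 j_lt nb_leE eq_j ltnn.
by move=> /(_ isT).
Qed.

Lemma in_PPF_K_prime_parking n (p : n.-tuple nat) :
  in_PPF_K p <-> prime_parking [set: 'I_n] (pf_of_tuple p).
Proof.
rewrite /in_PPF_K is_prime_GPF_Kmult Vt_ord0 prime_parking_imset; last exact: lift_inj.
by apply: eq_in_prime_parking => i _; rewrite /= /tup_fun liftK ffunE.
Qed.

Lemma in_SR_K_prime_parking n (c : n.-tuple int) :
  0 < n -> in_SR_K c <-> prime_parking [set: 'I_n] (pf_of_config c).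
Proof.
move=> n_gt0; rewrite /in_SR_K strongly_recurrent_Kmult // Vt_ord0.
rewrite prime_parking_imset; last exact: lift_inj.
by apply: eq_in_prime_parking => i _; rewrite /= /tupZ_fun liftK ffunE.
Qed.

Lemma prime_parking_ord1 (g : {ffun 'I_1 -> int}) :
  prime_parking [set: 'I_1] g <-> g = [ffun=> 1%R].
Proof.
split=> [[pg _] | ->].
  apply/ffunP => i; rewrite ffunE; have := pg.1 i (in_setT i).
  have := parking_le_card pg (in_setT i); rewrite cardsT card_ord.
  by move: (g i) => z; lia.
rewrite /prime_parking /parking cardsT card_ord.
split; last by case=> [|[]].
split=> [i _ | [//|[|//]] _]; first by rewrite ffunE.
rewrite card_gt0; apply/set0Pn; exists ord0; by rewrite !inE ffunE.
Qed.

Lemma prime_parking_succP m (g : {ffun 'I_m.+2 -> int}) :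
  prime_parking [set: 'I_m.+2] g <->
  exists2 x : {ffun 'I_m.+2 -> 'I_m.+1}, is_prime_pf x & g = succ_pf x.
Proof.
have card_I : #|'I_m.+2| = m.+2 by rewrite card_ord.
split=> [pg | [x prime_x ->]]; last exact/(prime_parking_succ card_I).
have g_bd i : (1 <= g i < (m.+2)%:Z)%R.
  rewrite pg.1.1 ?in_setT //=; have := prime_parking_lt_card pg _ (in_setT i).
  by rewrite cardsT card_I; apply.
pose x : {ffun 'I_m.+2 -> 'I_m.+1} := [ffun i => inord `|g i|.-1].
have eq_g : g = succ_pf x.
  apply/ffunP => i; rewrite !ffunE inordK; have := g_bd i.
    by case: (g i) => // a; rewrite /= lez_nat ltz_nat => /andP[a_gt0 _]; rewrite prednK.
  by case: (g i) => // a; rewrite /= lez_nat ltz_nat; lia.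
by exists x; rewrite // -(prime_parking_succ card_I) -eq_g.
Qed.

Lemma enum_prime_parking n :
  0 < n ->
  exists l : seq {ffun 'I_n -> int},
    [/\ uniq l, forall g, g \in l <-> prime_parking [set: 'I_n] g & size l = n.-1 ^ n.-1].
Proof.
case: n => [//|[|m]] _.
  by exists [:: [ffun=> 1%R]]; split=> // g; rewrite inE prime_parking_ord1; split=> /eqP.
exists (map (@succ_pf 'I_m.+2 m) (enum [set x | is_prime_pf x])); split.
- by rewrite map_inj_uniq ?enum_uniq //; apply: succ_pf_inj.
- move=> g; rewrite prime_parking_succP; split=> [/mapP[x] | [x prime_x ->]].
    by rewrite mem_enum inE => ? ->; exists x.
  by rewrite map_f // mem_enum inE.
- by rewrite size_map -cardE card_prime_pf ?card_ord.
Qed.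

Theorem proposition3p4 (n : nat) (hn : 0 < n) :
  (forall p : n.-tuple nat, is_PPF p <-> in_PPF_K p) /\
  (exists l : seq (n.-tuple nat),
      [/\ uniq l, (forall p, p \in l <-> in_PPF_K p) & size l = (n.-1) ^ (n.-1)]) /\
  (exists l : seq (n.-tuple int),
      [/\ uniq l, (forall c, c \in l <-> in_SR_K c) & size l = (n.-1) ^ (n.-1)]).
Proof.
have [l [l_uniq mem_l size_l]] := enum_prime_parking hn.
have tuple_of_ppfK (g : {ffun 'I_n -> int}) :
    prime_parking [set: 'I_n] g -> pf_of_tuple (tuple_of_pf g) = g.
  by case=> -[pos _] _; apply: tuple_of_pfK => i; apply: le_trans (pos i (in_setT i)).
split; first by move=> p; rewrite is_PPF_prime_parking in_PPF_K_prime_parking.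
split.
  have [l' [uniq' mem' size']] :=
    enum_preimage (can_inj (@pf_of_tupleK n)) tuple_of_ppfK l_uniq mem_l.
  exists l'; split=> // [p|]; first by rewrite mem' in_PPF_K_prime_parking.
  by rewrite size' size_l.
have [l' [uniq' mem' size']] :=
  enum_preimage (can_inj (@pf_of_configK n)) (fun g _ => config_of_pfK g) l_uniq mem_l.
exists l'; split=> // [c|]; first by rewrite mem' in_SR_K_prime_parking.
by rewrite size' size_l.
Qed.
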